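(* Consider a repeater chain in the model described in the context with $N+2$ nodes labelled $0,1,\dots,N+1$, where the end nodes $0$ and $N+1$ are a distance $L>0$ apart and the $N$ repeater nodes are placed along a line between them. Let $\ell_i>0$ denote the distance between nodes $i$ and $i+1$ for $i=0,\dots,N$, so that $\sum_{i=0}^N\ell_i=L$. Then the entangling rate $R$ of the chain, as a function of $(\ell_0,\dots,\ell_N)$, is maximal when the repeaters are placed equidistantly, i.e. when $\ell_i=L/(N+1)$ for all $i$.
   Context: Repeater-chain model (swap-ASAP, synchronized attempts). The chain has edges between consecutive nodes; edge $i$ has length $\ell_i\ge 0$ (in km). Entanglement generation proceeds in synchronized rounds, each of duration $t_{\mathrm{att}}=\frac1c\max_i\ell_i$ with $c=200{,}000$ km/s. In each round, every edge that has not yet succeeded makes an attempt which succeeds independently with probability $p_i=10^{-\alpha\ell_i/10}$, $\alpha=0.2\ \mathrm{km}^{-1}$. Thus the number of rounds $X_i$ until edge $i$ succeeds is geometric on $\{1,2,\dots\}$ with parameter $p_i$, the $X_i$ are independent, and end-to-end entanglement is complete after time $T_{\mathrm{done}}=t_{\mathrm{att}}\max_iX_i$. The entangling rate is $R=1/\mathbb E[T_{\mathrm{done}}]$. *)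

From HB Require Import structures.
From mathcomp Require Import all_boot all_order all_algebra.
From mathcomp Require Import all_classical all_reals all_analysis.
Set Implicit Arguments. Unset Strict Implicit. Unset Printing Implicit Defensive.
Import Order.TTheory GRing.Theory Num.Theory.
Local Open Scope ring_scope.
Local Open Scope classical_set_scope.

Section Repeater.
Variable R : realType.

(* attenuation alpha = 0.2 km^-1, speed of light in fibre c = 200000 km/s *)
Definition alpha : R := 2 / 10.
Definition c_light : R := 2 * 10 ^+ 5.

Definition psucc (l : R) : R := 10 `^ (- (alpha * l / 10)).

Definition t_att (N : nat) (l : 'I_N.+1 -> R) : R :=
  (\big[Num.max/0]_(i < N.+1) l i) / c_light.

Definition geom_pmf (p : R) (k : nat) : R :=
  if k is k'.+1 then p * (1 - p) ^+ k' else 0.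

Definition joint_pmf (N : nat) (l : 'I_N.+1 -> R) (x : 'I_N.+1 -> nat) : R :=
  \prod_(i < N.+1) geom_pmf (psucc (l i)) (x i).

Definition T_done (N : nat) (l : 'I_N.+1 -> R) (x : 'I_N.+1 -> nat) : R :=
  t_att l * (\max_(i < N.+1) x i)%N%:R.

Definition ET_done (N : nat) (l : 'I_N.+1 -> R) : \bar R :=
  esum [set: 'I_N.+1 -> nat] (fun x => (T_done l x * joint_pmf l x)%:E).

Definition rate (N : nat) (l : 'I_N.+1 -> R) : R := (fine (ET_done l))^-1.

End Repeater.

(* With t_i = - kappa l_i, where kappa = alpha ln 10 / 10, the success probabilities
   are p_i = e^(t_i) and P(max_i X_i <= n) = prod_i g_n(t_i) for
   g_n(t) = 1 - (1 - e^t)^n.  Each g_n is log-concave on t < 0: with q = 1 - e^t the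
   derivative of ln g_n is n q^(n-1) (1 - q) / (1 - q^n), which increases with q.
   By Jensen's inequality under the constraint sum_i t_i = - kappa L, equal spacing
   maximizes every P(max_i X_i <= n), hence minimizes E[max_i X_i] =
   sum_n P(max_i X_i > n); it also minimizes t_att, since max_i l_i >= L / (N + 1).
   So E[T_done] is smallest (and positive) for equal spacing.  The expectation, a sum
   over all of nat^(N+1), is approached through its truncations to the boxes
   [0, K]^(N+1). *)

From mathcomp Require Import all_boot all_order all_algebra finmap.
From mathcomp Require Import all_classical all_reals all_analysis.
From mathcomp Require Import ring.
Set Implicit Arguments.
Unset Strict Implicit.
Unset Printing Implicit Defensive.
Import Order.TTheory GRing.Theory Num.Theory.
Import numFieldNormedType.Exports.
Local Open Scope ring_scope.
Local Open Scope classical_set_scope.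

Section MaxOfGeometrics.
Variables (R : realType) (m : nat).
Implicit Types (p : 'I_m -> R) (x : 'I_m -> nat).

Definition geom_cdf (q : R) (n : nat) : R := 1 - (1 - q) ^+ n.

Definition prod_geom_pmf p x : R := \prod_i geom_pmf (p i) (x i).

Definition max_coord x : nat := (\max_(i < m) x i)%N.

Definition cdf_max p (n : nat) : R := \prod_i geom_cdf (p i) n.

Definition box_pt (K : nat) (f : {ffun 'I_m -> 'I_K.+1}) : 'I_m -> nat :=
  fun i => f i.

Definition box_mean p (K : nat) : R :=
  \sum_(f : {ffun 'I_m -> 'I_K.+1}) prod_geom_pmf p (box_pt f) * (max_coord (box_pt f))%:R.

Lemma sum_geom_pmf (q : R) n : \sum_(k < n.+1) geom_pmf q k = geom_cdf q n.
Proof.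
elim: n => [|n IH]; first by rewrite big_ord1 /geom_cdf expr0 subrr.
by rewrite big_ord_recr /= IH /geom_cdf exprS; ring.
Qed.

Lemma natr_max_coord_le x n :
  ((max_coord x <= n)%N%:R : R) = \prod_i ((x i <= n)%N%:R).
Proof.
rewrite /max_coord; case: bigmax_leqP => [x_le|x_gt].
  by rewrite big1 // => i _; rewrite x_le.
have : ~~ [forall i, x i <= n]%N.
  by apply/negP => /forallP x_le; apply: x_gt => i _; exact: x_le.
rewrite negb_forall => /existsP[i x_gt_i].
by rewrite (bigD1 i) //= (negbTE x_gt_i) mul0r.
Qed.

Lemma max_coord_box_le K (f : {ffun 'I_m -> 'I_K.+1}) : (max_coord (box_pt f) <= K)%N.
Proof. by apply/bigmax_leqP => i _; rewrite /box_pt -ltnS. Qed.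

(* Distributivity turns the box sum into a product of truncated geometric sums. *)
Lemma sum_box_max_coord_le p n K : (n <= K)%N ->
  \sum_(f : {ffun 'I_m -> 'I_K.+1})
     prod_geom_pmf p (box_pt f) * ((max_coord (box_pt f) <= n)%N%:R) = cdf_max p n.
Proof.
move=> nK.
under eq_bigr => f _ do rewrite natr_max_coord_le /prod_geom_pmf -big_split /=.
rewrite -(bigA_distr_bigA (fun i (k : 'I_K.+1) => geom_pmf (p i) k * (k <= n)%N%:R)).
apply: eq_bigr => i _.
rewrite -sum_geom_pmf (@big_ord_widen _ _ _ n.+1 K.+1 (geom_pmf (p i)) nK) [RHS]big_mkcond /=.
by apply: eq_bigr => k _; rewrite ltnS; case: (k <= n)%N; rewrite ?mulr1 ?mulr0.
Qed.

Lemma sum_natr_ltn_minn (a K : nat) : \sum_(n < K) ((n < a)%N%:R : R) = (minn a K)%:R.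
Proof.
elim: K => [|K IH]; first by rewrite big_ord0 minn0.
rewrite big_ord_recr /= IH; case: (leqP a K) => [aK|Ka].
  by rewrite addr0 !(minn_idPl _) // ltnW.
by rewrite natr1 (minn_idPr Ka).
Qed.

(* The tail-sum formula E[min(M, K)] = sum_(n < K) P(M > n), on the box [0, K']^m
   whose total mass is cdf_max p K'. *)
Lemma sum_box_minn p K K' : (K <= K')%N ->
  \sum_(f : {ffun 'I_m -> 'I_K'.+1})
     prod_geom_pmf p (box_pt f) * (minn (max_coord (box_pt f)) K)%:R
  = \sum_(n < K) (cdf_max p K' - cdf_max p n).
Proof.
move=> KK'.
have total : \sum_(f : {ffun 'I_m -> 'I_K'.+1}) prod_geom_pmf p (box_pt f) = cdf_max p K'.
  rewrite -(sum_box_max_coord_le p (leqnn K')); apply: eq_bigr => f _.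
  by rewrite max_coord_box_le mulr1.
under eq_bigr => f _ do rewrite -sum_natr_ltn_minn mulr_sumr.
rewrite exchange_big /=; apply: eq_bigr => n _.
rewrite -total -(sum_box_max_coord_le p (ltnW (leq_trans (ltn_ord n) KK'))) -sumrB.
apply: eq_bigr => f _.
by rewrite ltnNge; case: (_ <= n)%N; rewrite ?mulr0 ?mulr1 ?subrr ?subr0.
Qed.

Lemma box_meanE p K : box_mean p K = \sum_(n < K) (cdf_max p K - cdf_max p n).
Proof.
rewrite -sum_box_minn //; apply: eq_bigr => f _.
by rewrite (minn_idPl (max_coord_box_le f)).
Qed.

Lemma geom_pmf_ge0 (q : R) k : 0 <= q <= 1 -> 0 <= geom_pmf q k.
Proof.
case/andP=> q_ge0 q_le1; case: k => [|k] //=.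
by rewrite mulr_ge0 // exprn_ge0 // subr_ge0.
Qed.

Lemma geom_cdf_ge0 (q : R) n : 0 <= q <= 1 -> 0 <= geom_cdf q n.
Proof.
by case/andP=> q_ge0 q_le1; rewrite subr_ge0 exprn_ile1 // ?subr_ge0 // gerBl.
Qed.

Lemma geom_cdf_le1 (q : R) n : 0 <= q <= 1 -> geom_cdf q n <= 1.
Proof. by case/andP=> _ q_le1; rewrite gerBl exprn_ge0 // subr_ge0. Qed.

Variable p : 'I_m -> R.
Hypothesis p01 : forall i, 0 <= p i <= 1.

Lemma prod_geom_pmf_ge0 x : 0 <= prod_geom_pmf p x.
Proof. by apply: prodr_ge0 => i _; exact: geom_pmf_ge0. Qed.

Lemma cdf_max_le1 n : cdf_max p n <= 1.
Proof.
by apply: prodr_ile1 => i _; rewrite geom_cdf_ge0 ?geom_cdf_le1.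
Qed.

Lemma box_mean_ge K K' : (K <= K')%N ->
  \sum_(n < K) (cdf_max p K' - cdf_max p n) <= box_mean p K'.
Proof.
move=> KK'; rewrite -sum_box_minn //; apply: ler_sum => f _.
by rewrite ler_wpM2l ?prod_geom_pmf_ge0 // ler_nat geq_minl.
Qed.

Lemma cdf_max_cvg1 : (forall i, 0 < p i) -> cdf_max p n @[n --> \oo] --> (1 : R).
Proof.
move=> p_gt0.
have -> : (1 : R) = \prod_(i < m) (1 - 0) by rewrite subr0 big1.
rewrite /cdf_max; apply: (cvg_big mul_continuous) => i _.
apply: cvgB; first exact: cvg_cst.
apply: cvg_expr; have /andP[_ p_le1] := p01 i.
by rewrite ger0_norm ?subr_ge0 // ltrBlDr ltrDl.
Qed.

End MaxOfGeometrics.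

Section Attenuation.
Variable R : realType.

Definition attenuation : R := alpha R / 10 * ln 10.

Lemma attenuation_gt0 : 0 < attenuation.
Proof. by rewrite mulr_gt0 ?ln_gt0 ?ltr1n // /alpha !divr_gt0. Qed.

Lemma psuccE (x : R) : psucc x = expR (- (attenuation * x)).
Proof.
rewrite /psucc /powR ifF ?pnatr_eq0 //.
by congr expR; rewrite /attenuation; ring.
Qed.

Lemma psucc_gt0 (x : R) : 0 < psucc x.
Proof. by rewrite psuccE expR_gt0. Qed.

Lemma psucc_le1 (x : R) : 0 <= x -> psucc x <= 1.
Proof.
by move=> x_ge0; rewrite psuccE expR_le1 oppr_le0 mulr_ge0 // ltW // attenuation_gt0.
Qed.

Lemma psucc_in01 (x : R) : 0 <= x -> 0 <= psucc x <= 1.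
Proof. by move=> x_ge0; rewrite ltW ?psucc_gt0 ?psucc_le1. Qed.

Lemma c_light_gt0 : 0 < c_light R.
Proof. by rewrite mulr_gt0 // exprn_gt0. Qed.

Lemma t_att_ge0 N (l : 'I_N.+1 -> R) : (forall i, 0 <= l i) -> 0 <= t_att l.
Proof.
move=> l_ge0; rewrite divr_ge0 ?(ltW c_light_gt0) //.
exact: le_trans (l_ge0 ord0) (le_bigmax _ l ord0).
Qed.

Lemma t_att_cst N (a : R) : 0 <= a -> t_att (fun _ : 'I_N.+1 => a) = a / c_light R.
Proof.
move=> a_ge0; congr (_ / _); apply/le_anti.
by rewrite bigmax_le //= (le_bigmax _ (fun=> a) ord0).
Qed.

Lemma t_att_ge_mean N (l : 'I_N.+1 -> R) :
  (\sum_i l i) / N.+1%:R / c_light R <= t_att l.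
Proof.
rewrite ler_pM2r ?invr_gt0 ?c_light_gt0 // ler_pdivrMr ?ltr0Sn //.
apply: le_trans (ler_sum _ (fun i _ => le_bigmax (0 : R) l i)) _.
by rewrite sumr_const card_ord mulr_natr.
Qed.

End Attenuation.

Lemma fsbigT_finType (T : finType) (R : Type) (idx : R) (op : Monoid.com_law idx)
    (F : T -> R) :
  \big[op/idx]_(x \in [set: T]) F x = \big[op/idx]_(x : T) F x.
Proof.
rewrite (fsbigTE [fset x | x : T]%fset); last by move=> x; rewrite in_imfset.
by rewrite big_imfset //= big_enum.
Qed.

Definition box_set {m} (K : nat) : set ('I_m -> nat) := range (@box_pt m K).

Lemma box_pt_inj m K : injective (@box_pt m K).
Proof.
move=> f g fg; apply/ffunP => i; apply/val_inj.
exact: (congr1 (fun h => h i) fg).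
Qed.

Lemma finite_box_set m K : finite_set (@box_set m K).
Proof. exact/finite_image/finite_finset. Qed.

Lemma finite_sub_box_set m (X : set ('I_m -> nat)) :
  finite_set X -> exists K, X `<=` box_set K.
Proof.
move/finite_fsetP => [B ->].
exists (\max_(x <- B) max_coord x)%N => x /= xB.
exists [ffun i => inord (x i)] => //.
apply/funext => i; rewrite /box_pt ffunE inordK // ltnS.
apply: leq_trans (leq_bigmax i) _.
by have := @leq_bigmax_seq _ (B : seq _) xpredT (@max_coord m) x xB isT.
Qed.

Section ExpectationOnBoxes.
Variables (R : realType) (N : nat) (l : 'I_N.+1 -> R).

Let p i := psucc (l i).

Lemma fsbig_box_T_done K :
  \sum_(x \in box_set K) (T_done l x * joint_pmf l x)%:E = (t_att l * box_mean p K)%:E.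
Proof.
rewrite fsbig_image; last by move=> f g _ _; apply: box_pt_inj.
rewrite fsbigT_finType sumEFin /box_mean mulr_sumr; congr _%:E.
by apply: eq_bigr => f _; rewrite /T_done /joint_pmf /prod_geom_pmf /max_coord; ring.
Qed.

Lemma box_mean_le_ET_done K : ((t_att l * box_mean p K)%:E <= ET_done l)%E.
Proof.
rewrite -fsbig_box_T_done; apply: esum_ge.
by exists (box_set K) => //; split; [exact: finite_box_set|].
Qed.

Hypothesis l_ge0 : forall i, 0 <= l i.

Let p01 i : 0 <= p i <= 1. Proof. exact: psucc_in01. Qed.

Lemma ET_done_le (y : \bar R) :
  (forall K, ((t_att l * box_mean p K)%:E <= y)%E) -> (ET_done l <= y)%E.
Proof.
move=> box_le; apply: ge_ereal_sup => _ [X [finX _] <-].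
have [K XK] := finite_sub_box_set finX.
apply: le_trans (box_le K); rewrite -fsbig_box_T_done.
apply: lee_fsum_nneg_subset => //; first exact: finite_box_set.
- by move=> x; rewrite !inE => /XK.
- move=> x _; rewrite lee_fin mulr_ge0 //; last exact: prod_geom_pmf_ge0.
  by rewrite mulr_ge0 ?t_att_ge0.
Qed.

Lemma tail_sum_le_ET_done K :
  ((t_att l * \sum_(n < K) (1 - cdf_max p n))%:E <= ET_done l)%E.
Proof.
case ET: (ET_done l) => [r| |]; last 2 first.
- exact: leey.
- by have := box_mean_le_ET_done 0; rewrite ET.
have tail_cvg : t_att l * \sum_(n < K) (cdf_max p K' - cdf_max p n) @[K' --> \oo] -->
    t_att l * \sum_(n < K) (1 - cdf_max p n).
  apply: cvgM; first exact: cvg_cst.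
  apply: (cvg_big add_continuous) => n _.
  apply: cvgB; last exact: cvg_cst.
  by apply: cdf_max_cvg1 => // i; exact: psucc_gt0.
rewrite lee_fin; apply: (cvgr_to_le tail_cvg); exists K => // K' /= KK'.
rewrite -lee_fin -ET; apply: le_trans (box_mean_le_ET_done K').
by rewrite lee_fin ler_wpM2l ?t_att_ge0 ?box_mean_ge.
Qed.

End ExpectationOnBoxes.

Section BelowTangent.
Variables (R : realType) (f df : R -> R) (b : R).
Hypothesis f_derive : forall x : R, x < b -> is_derive x 1 f (df x).
Hypothesis df_nonincr : forall x y : R, x <= y -> y < b -> df y <= df x.

Let f_cont u v : v < b -> {within `[u, v], continuous f}.
Proof.
move=> vb; apply: derivable_within_continuous => x; rewrite in_itv /= => /andP[_ xv].
by have [] := f_derive (le_lt_trans xv vb).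
Qed.

Let f_derive_in u v : v < b -> forall x, x \in `]u, v[%R -> is_derive x 1 f (df x).
Proof. by move=> vb x; rewrite in_itv /= => /andP[_ xv]; exact/f_derive/(lt_trans xv). Qed.

Lemma le_tangent (t t0 : R) : t < b -> t0 < b -> f t <= f t0 + df t0 * (t - t0).
Proof.
move=> tb t0b; case: (ltgtP t t0) => [tt0|t0t|->]; last by rewrite subrr mulr0 addr0.
- have [c] := MVT tt0 (f_derive_in t0b) (f_cont t0b).
  rewrite in_itv /= => /andP[_ ct0] fE.
  rewrite -lerBlDl -opprB fE -(opprB t0 t) mulrN lerN2.
  by apply: ler_wpM2r; [rewrite subr_ge0 (ltW tt0) | exact: df_nonincr (ltW ct0) t0b].
- have [c] := MVT t0t (f_derive_in tb) (f_cont tb).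
  rewrite in_itv /= => /andP[t0c ct] fE.
  rewrite -lerBlDl fE.
  apply: ler_wpM2r; first by rewrite subr_ge0 (ltW t0t).
  exact: df_nonincr (ltW t0c) (lt_trans ct tb).
Qed.

(* Jensen's inequality: the first-order terms of the tangent bounds cancel. *)
Lemma sum_le_tangent M (t : 'I_M -> R) (t0 : R) : (forall i, t i < b) -> t0 < b ->
  \sum_i t i = M%:R * t0 -> \sum_i f (t i) <= M%:R * f t0.
Proof.
move=> tb t0b t_sum.
apply: le_trans (ler_sum _ (fun i _ => le_tangent (tb i) t0b)) _.
rewrite big_split /= -mulr_sumr sumrB t_sum !sumr_const card_ord !mulr_natl.
by rewrite subrr mulr0 addr0.
Qed.

End BelowTangent.

Section LogConcavity.
Variable R : realType.

(* The ratio equals w^m / (1 + w + ... + w^m), and w^m v^i <= v^m w^i for i <= m. *)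
Lemma pow_ratio_le (m : nat) (w v : R) : 0 < w -> w <= v -> v < 1 ->
  w ^+ m * (1 - w) / (1 - w ^+ m.+1) <= v ^+ m * (1 - v) / (1 - v ^+ m.+1).
Proof.
move=> w_gt0 wv v_lt1.
have v_gt0 : 0 < v by exact: lt_le_trans wv.
have geom_sum_gt0 (x : R) : 0 < x -> 0 < \sum_(i < m.+1) x ^+ i.
  move=> x_gt0; rewrite big_ord_recl expr0 ltr_pwDl //.
  by apply: sumr_ge0 => i _; rewrite exprn_ge0 // ltW.
have ratioE (x : R) : x < 1 ->
    x ^+ m * (1 - x) / (1 - x ^+ m.+1) = x ^+ m / \sum_(i < m.+1) x ^+ i.
  move=> x_lt1; rewrite -[1 - x ^+ m.+1]opprB subrX1 -mulNr opprB invfM mulrA mulfK //.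
  by rewrite subr_eq0 gt_eqF.
rewrite !ratioE ?(le_lt_trans wv) //.
rewrite ler_pdivrMr ?geom_sum_gt0 // mulrAC ler_pdivlMr ?geom_sum_gt0 //.
rewrite !mulr_sumr; apply: ler_sum => i _.
have key (j k : nat) : w ^+ (j + k) * v ^+ j <= v ^+ (j + k) * w ^+ j.
  rewrite !exprD mulrAC [v ^+ j * _ * _]mulrAC [v ^+ j * w ^+ j]mulrC.
  by rewrite ler_pM2l ?mulr_gt0 ?exprn_gt0 // lerXn2r // nnegrE ltW.
by have := key i (m - i)%N; rewrite subnKC // -ltnS.
Qed.

Lemma geom_cdf_gt0 (q : R) n : 0 < q <= 1 -> 0 < geom_cdf q n.+1.
Proof.
case/andP=> q_gt0 q_le1; rewrite subr_gt0 exprn_ilt1 ?subr_ge0 //.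
by rewrite ltrBlDr ltrDl.
Qed.

Definition log_geom_cdf_exp (n : nat) (t : R) : R := ln (geom_cdf (expR t) n).

Definition log_geom_cdf_exp' (n : nat) (t : R) : R :=
  n%:R * (1 - expR t) ^+ n.-1 * expR t / geom_cdf (expR t) n.

Lemma expR_in01 (t : R) : t < 0 -> 0 < expR t <= 1.
Proof. by move=> t_lt0; rewrite expR_gt0 expR_le1 ltW. Qed.

Lemma is_derive_log_geom_cdf_exp n (t : R) : t < 0 ->
  is_derive t 1 (log_geom_cdf_exp n.+1) (log_geom_cdf_exp' n.+1 t).
Proof.
move=> t_lt0.
have cdf_derive : is_derive t 1 (fun s : R => geom_cdf (expR s) n.+1)
    (n.+1%:R * (1 - expR t) ^+ n * expR t).
  have d1 : is_derive t 1 (fun s : R => 1 - expR s) (- expR t).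
    by apply: is_derive_eq; rewrite add0r mul1r.
  have dX : is_derive t 1 ((fun s : R => 1 - expR s) ^+ n.+1)
      ((n.+1%:R * (1 - expR t) ^+ n) *: - expR t) by exact: is_deriveX.
  have dB : is_derive t 1 (cst 1 - (fun s : R => 1 - expR s) ^+ n.+1)
      (0 - (n.+1%:R * (1 - expR t) ^+ n) *: - expR t) by exact: is_deriveB.
  have -> : (fun s : R => geom_cdf (expR s) n.+1) = cst 1 - (fun s => 1 - expR s) ^+ n.+1.
    by apply/funext => s; rewrite /geom_cdf exprfctE.
  by apply: (is_derive_eq dB); rewrite sub0r /GRing.scale /= mulrN opprK.
apply: (is_derive_eq (@is_derive1_comp R (@ln R) (fun s => geom_cdf (expR s) n.+1) t _ _
  (is_derive1_ln (geom_cdf_gt0 n (expR_in01 t_lt0))) cdf_derive)).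
by rewrite /log_geom_cdf_exp' mulrC.
Qed.

Lemma log_geom_cdf_exp'_nonincr n (s t : R) : s <= t -> t < 0 ->
  log_geom_cdf_exp' n.+1 t <= log_geom_cdf_exp' n.+1 s.
Proof.
move=> st t_lt0.
have derivE x : log_geom_cdf_exp' n.+1 x = n.+1%:R *
    ((1 - expR x) ^+ n * (1 - (1 - expR x)) / (1 - (1 - expR x) ^+ n.+1)).
  by rewrite /log_geom_cdf_exp' /geom_cdf subKr !mulrA.
rewrite !derivE ler_pM2l ?ltr0Sn //; apply: pow_ratio_le.
- by rewrite subr_gt0 expR_lt1.
- by rewrite lerD2l lerN2 ler_expR.
- by rewrite ltrBlDr ltrDl expR_gt0.
Qed.

Lemma prod_geom_cdf_exp_le M (t : 'I_M -> R) (t0 : R) n :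
  (forall i, t i < 0) -> t0 < 0 -> \sum_i t i = M%:R * t0 ->
  \prod_i geom_cdf (expR (t i)) n <= geom_cdf (expR t0) n ^+ M.
Proof.
case: n => [|n] t_lt0 t0_lt0 t_sum.
  rewrite (eq_bigr (fun=> 0)) => [|i _]; last by rewrite /geom_cdf expr0 subrr.
  by rewrite prodr_const card_ord /geom_cdf expr0 subrr.
have cdfE (x : R) : x < 0 -> geom_cdf (expR x) n.+1 = expR (log_geom_cdf_exp n.+1 x).
  by move=> x_lt0; rewrite lnK // posrE geom_cdf_gt0 // expR_in01.
rewrite (eq_bigr _ (fun i _ => cdfE _ (t_lt0 i))) -expR_sum cdfE //.
rewrite -expRM_natl ler_expR.
by rewrite (sum_le_tangent (is_derive_log_geom_cdf_exp n) (@log_geom_cdf_exp'_nonincr n)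
  t_lt0 t0_lt0 t_sum).
Qed.

End LogConcavity.

Section Equidistant.
Variables (R : realType) (N : nat) (L : R) (l : 'I_N.+1 -> R).
Hypotheses (L_gt0 : 0 < L) (l_gt0 : forall i, 0 < l i) (l_sum : \sum_i l i = L).

Local Notation a := (L / N.+1%:R).
Local Notation l_eq := (fun _ : 'I_N.+1 => a).

Let a_gt0 : 0 < a. Proof. by rewrite divr_gt0 ?ltr0Sn. Qed.

Let l_ge0 i : 0 <= l i. Proof. exact: ltW. Qed.

Lemma cdf_max_le_equidistant n :
  cdf_max (fun i => psucc (l i)) n <= cdf_max (fun i => psucc (l_eq i)) n.
Proof.
have attenuated_lt0 (x : R) : 0 < x -> - (attenuation R * x) < 0.
  by move=> x_gt0; rewrite oppr_lt0 mulr_gt0 ?attenuation_gt0.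
rewrite /cdf_max prodr_const card_ord psuccE.
under eq_bigr do rewrite psuccE.
apply: prod_geom_cdf_exp_le => [i||]; rewrite ?attenuated_lt0 //.
by rewrite sumrN -mulr_sumr l_sum; field; rewrite addrC natr1 pnatr_eq0.
Qed.

Lemma t_att_equidistant : t_att l_eq <= t_att l.
Proof. by rewrite t_att_cst ?(ltW a_gt0) // -l_sum t_att_ge_mean. Qed.

Lemma ET_done_equidistant_le : (ET_done l_eq <= ET_done l)%E.
Proof.
have pe01 (i : 'I_N.+1) : 0 <= psucc (l_eq i) <= 1 by exact/psucc_in01/ltW.
have te_ge0 : 0 <= t_att l_eq by apply: t_att_ge0 => i; exact: ltW.
apply: ET_done_le => [i|K]; first exact: ltW.
apply: le_trans (tail_sum_le_ET_done l_ge0 K); rewrite lee_fin box_meanE.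
apply: (@le_trans _ _ (t_att l_eq * \sum_(n < K) (1 - cdf_max (fun i => psucc (l_eq i)) n))).
  by rewrite ler_wpM2l //; apply: ler_sum => n _; rewrite lerD2r cdf_max_le1.
apply: ler_pM.
- exact: te_ge0.
- by apply: sumr_ge0 => n _; rewrite subr_ge0 cdf_max_le1.
- exact: t_att_equidistant.
- by apply: ler_sum => n _; rewrite lerD2l lerN2 cdf_max_le_equidistant.
Qed.

Lemma ET_done_equidistant_gt0 : (0 < ET_done l_eq)%E.
Proof.
apply: lt_le_trans (box_mean_le_ET_done l_eq 1); rewrite lte_fin box_meanE big_ord1.
have -> : cdf_max (fun i => psucc (l_eq i)) 0 = 0.
  by rewrite /cdf_max big_ord_recl /geom_cdf expr0 subrr mul0r.
rewrite subr0 mulr_gt0 //; last first.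
  by apply: prodr_gt0 => i _; rewrite /geom_cdf expr1 subKr psucc_gt0.
by rewrite t_att_cst ?divr_gt0 ?c_light_gt0 // ltW.
Qed.

End Equidistant.

Lemma inv_fine_le (R : realType) (x y : \bar R) :
  (0 < x)%E -> (x <= y)%E -> (fine y)^-1 <= (fine x)^-1.
Proof.
case: x => [s| |] //; case: y => [r| |] //=; rewrite ?lte_fin ?lee_fin.
- by move=> s_gt0 sr; rewrite lef_pV2 ?posrE // (lt_le_trans s_gt0 sr).
- by move=> s_gt0 _; rewrite invr0 invr_ge0 ltW.
Qed.

Theorem mainTheorem2 (R : realType) (N : nat) (L : R) (hL : 0 < L)
    (l : 'I_N.+1 -> R) (hpos : forall i, 0 < l i)
    (hsum : \sum_(i < N.+1) l i = L) :
  rate l <= rate (fun _ : 'I_N.+1 => L / N.+1%:R).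
Proof.
exact: inv_fine_le (ET_done_equidistant_gt0 N hL) (ET_done_equidistant_le hL hpos hsum).
Qed.
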